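(* Let $\mathcal{H}$ be a complex Hilbert space, $A\in\mathcal{B}(\mathcal{H})$ positive and $S\in\mathcal{B}_A(\mathcal{H})$. Then $$\max\left\{\omega_A\left(\Re_A(S)+iS^{\sharp_A}S\right),\ \omega_A\left(\Im_A(S)+iS^{\sharp_A}S\right)\right\}\le d\omega_A(S)$$ and $$d\omega_A(S)\le\min\left\{\sqrt{\omega_A^2\left(\Re_A(S)+iS^{\sharp_A}S\right)+\|\Im_A(S)\|_A^2},\ \sqrt{\omega_A^2\left(\Im_A(S)+iS^{\sharp_A}S\right)+\|\Re_A(S)\|_A^2}\right\}.$$
   Context: $\mathcal{B}(\mathcal{H})$ denotes the bounded linear operators on $\mathcal{H}$. For positive $A$, $\langle x,z\rangle_A=\langle Ax,z\rangle$ and $\|z\|_A=\|A^{1/2}z\|$. $\mathcal{B}_A(\mathcal{H})$ is the set of $S\in\mathcal{B}(\mathcal{H})$ for which some $R\in\mathcal{B}(\mathcal{H})$ satisfies $AR=S^*A$; for such $S$, $S^{\sharp_A}=A^{\dagger}S^*A$ with $A^\dagger$ the Moore–Penrose inverse of $A$. $\Re_A(S)=\frac{S+S^{\sharp_A}}{2}$ and $\Im_A(S)=\frac{S-S^{\sharp_A}}{2i}$. For operators $T$ bounded with respect to $\|\cdot\|_A$: $\|T\|_A=\sup_{\|z\|_A=1}\|Tz\|_A$, $\omega_A(T)=\sup_{\|z\|_A=1}|\langle Tz,z\rangle_A|$, and $d\omega_A(T)=\sup_{\|z\|_A=1}(|\langle Tz,z\rangle_A|^2+\|Tz\|_A^4)^{1/2}$.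 *)

From HB Require Import structures.
From mathcomp Require Import all_boot all_order all_algebra.
From mathcomp Require Import all_classical.
From mathcomp Require Import reals constructive_ereal ereal.
From mathcomp Require Import complex.
Set Implicit Arguments. Unset Strict Implicit. Unset Printing Implicit Defensive.
Import Order.TTheory GRing.Theory Num.Theory.
Local Open Scope ring_scope.
Local Open Scope classical_set_scope.

Section Hilbert.
Variable R : realType.
Local Notation C := R[i].
Variable V : lmodType C.
Variable ip : V -> V -> C.

Definition cabs (z : C) : R := Num.sqrt (complex.Re z ^+ 2 + complex.Im z ^+ 2).

Definition hnorm (x : V) : R := Num.sqrt (complex.Re (ip x x)).

Definition is_complex_hilbert : Prop :=
  [/\ (forall (a : C) (x y z : V), ip (a *: x + y) z = a * ip x z + ip y z),
      (forall x y : V, ip y x = conjc (ip x y)),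
      (forall x : V, 0 <= ip x x),
      (forall x : V, ip x x = 0 -> x = 0) &
      (forall u : nat -> V,
         (forall e : R, 0 < e -> exists N, forall m n, (N <= m)%N -> (N <= n)%N ->
             hnorm (u m - u n) < e) ->
         exists l : V, forall e : R, 0 < e -> exists N, forall n, (N <= n)%N ->
             hnorm (u n - l) < e)].

Definition is_bounded_op (T : V -> V) : Prop :=
  (forall (a : C) (x y : V), T (a *: x + y) = a *: T x + T y) /\
  (exists M : R, forall x, hnorm (T x) <= M * hnorm x).

Definition is_positive_op (A : V -> V) : Prop :=
  is_bounded_op A /\ forall x, 0 <= ip (A x) x.

Definition adjoint (T : V -> V) : V -> V :=
  fun y => xget 0 [set w | forall x, ip (T x) y = ip x w].

(* Moore–Penrose inverse of A: for y in R(A) (+) R(A)^perp, A^dag y is the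
   unique x in N(A)^perp with A x = P_{closure R(A)} y, i.e. with
   x in N(A)^perp and y - A x in R(A)^perp. *)
Definition mp_inverse (A : V -> V) : V -> V :=
  fun y => xget 0 [set x | (forall k, A k = 0 -> ip x k = 0) /\
                           (forall v, ip (y - A x) (A v) = 0)].

Definition in_BA (A S : V -> V) : Prop :=
  is_bounded_op S /\
  exists Rop : V -> V, is_bounded_op Rop /\ forall x, A (Rop x) = adjoint S (A x).

Definition asharp (A S : V -> V) : V -> V :=
  fun z => mp_inverse A (adjoint S (A z)).

Definition ReA (A S : V -> V) : V -> V :=
  fun z => 2^-1 *: (S z + asharp A S z).
Definition ImA (A S : V -> V) : V -> V :=
  fun z => (2 * ('i)%C)^-1 *: (S z - asharp A S z).

(* <x,z>_A = <Ax,z> ;  ||z||_A = ||A^{1/2} z|| = sqrt <Az,z> *)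
Definition ipA (A : V -> V) (x z : V) : C := ip (A x) z.
Definition normA (A : V -> V) (z : V) : R := Num.sqrt (complex.Re (ip (A z) z)).

(* supremum over the A-unit sphere, of nonnegative quantities (empty sup = 0) *)
Definition supA (A : V -> V) (f : V -> R) : \bar R :=
  ereal_sup ([set 0%E] `|` [set (f z)%:E | z in [set z | normA A z = 1]]).

Definition opnormA (A T : V -> V) : \bar R := supA A (fun z => normA A (T z)).
Definition numradA (A T : V -> V) : \bar R := supA A (fun z => cabs (ipA A (T z) z)).
Definition dnumradA (A T : V -> V) : \bar R :=
  supA A (fun z => Num.sqrt (cabs (ipA A (T z) z) ^+ 2 + normA A (T z) ^+ 4)).

End Hilbert.

Definition esqrt (R : realType) (x : \bar R) : \bar R :=
  match x with
  | EFin r => (Num.sqrt r)%:E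
  | +oo%E => +oo%E
  | -oo%E => 0%E
  end.

From HB Require Import structures.
From mathcomp Require Import all_boot all_order all_algebra.
From mathcomp Require Import all_classical.
From mathcomp Require Import reals constructive_ereal ereal.
From mathcomp Require Import complex.
From mathcomp Require Import ring lra.
Set Implicit Arguments. Unset Strict Implicit. Unset Printing Implicit Defensive.
Import Order.TTheory GRing.Theory Num.Theory.
Local Open Scope ring_scope.
Local Open Scope classical_set_scope.

(* Fix an A-unit vector z and put p = <Sz, z>_A, q = ||Sz||_A^2.  Since A S^#A = S^* A,
   <Re_A(S) z, z>_A = Re p, <Im_A(S) z, z>_A = Im p and <S^#A S z, z>_A = q, hence
     |p|^2 + ||Sz||_A^4 = |<(Re_A(S) + i S^#A S) z, z>_A|^2 + (Im p)^2.
   Dropping (Im p)^2 gives the lower bound; bounding it by ||Im_A(S) z||_A^2 (Cauchy-Schwarz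
   for the semi-inner product <.,.>_A, as Im p = <Im_A(S) z, z>_A) gives the upper bound, and
   symmetrically with Re and Im exchanged.  The identity A S^#A = S^* A, i.e. A A^+ y = y on
   the range of A, and the existence of S^* both rest on the projection theorem for closed
   subspaces of the complete space H. *)

Local Notation Re := complex.Re.
Local Notation Im := complex.Im.
Local Notation "x %:C" := (real_complex _ x) : ring_scope.
Local Notation "x +i* y" := (Complex x y) : ring_scope.

Lemma quad_ge0_sqr_le (R : realFieldType) (a b c : R) : 0 <= c ->
  (forall t, 0 <= a + 2 * b * t + c * t ^+ 2) -> b ^+ 2 <= a * c.
Proof.
move=> c_ge0 q_ge0.
have a_ge0 : 0 <= a by have := q_ge0 0; rewrite mulr0 expr0n /= mulr0 !addr0.
have [c0|c_neq0] := eqVneq c 0.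
  have [-> | b_neq0] := eqVneq b 0; first by rewrite expr0n /= mulr_ge0.
  have := q_ge0 (- (a + 1) / (2 * b)); rewrite c0 mul0r addr0.
  have -> : 2 * b * (- (a + 1) / (2 * b)) = - (a + 1) by field; rewrite b_neq0.
  lra.
have c_gt0 : 0 < c by rewrite lt0r c_neq0.
have := q_ge0 (- b / c).
have -> : a + 2 * b * (- b / c) + c * (- b / c) ^+ 2 = (a * c - b ^+ 2) / c by field.
by rewrite pmulr_lge0 ?invr_gt0 // subr_ge0.
Qed.

Lemma complex_ge0E (R : rcfType) (z : R[i]) : 0 <= z -> z = (Re z)%:C.
Proof. by case: z => a b; rewrite lecE /= => /andP[/eqP ->]. Qed.

Lemma inv_succ_lt (R : archiRealFieldType) (e : R) : 0 < e ->
  exists N, forall n, (N <= n)%N -> n.+1%:R^-1 < e.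
Proof.
move=> e_gt0; exists (Num.Def.archi_bound e^-1) => n le_Nn.
have Ve_ge0 : 0 <= e^-1 by rewrite invr_ge0 ltW.
have lt_e_N := archi_boundP Ve_ge0.
rewrite -[e]invrK ltf_pV2 ?posrE ?ltr0Sn ?invr_gt0 //.
by apply: (lt_le_trans lt_e_N); rewrite ler_nat (leq_trans le_Nn).
Qed.

Section SesquilinearForm.
Variables (R : realType) (V : lmodType R[i]) (B : V -> V -> R[i]).
Hypothesis BL : forall (a : R[i]) (x y z : V), B (a *: x + y) z = a * B x z + B y z.
Hypothesis BC : forall x y, B y x = conjc (B x y).
Hypothesis BP : forall x, 0 <= B x x.

Lemma form0l z : B 0 z = 0.
Proof. by have := BL (-1) 0 0 z; rewrite scaleN1r addNr mulN1r addNr. Qed.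

Lemma formDl x y z : B (x + y) z = B x z + B y z.
Proof. by rewrite -[x]scale1r BL mul1r scale1r. Qed.

Lemma formZl a x z : B (a *: x) z = a * B x z.
Proof. by rewrite -[a *: x]addr0 BL form0l addr0. Qed.

Lemma formNl x z : B (- x) z = - B x z.
Proof. by rewrite -scaleN1r formZl mulN1r. Qed.

Lemma formBl x y z : B (x - y) z = B x z - B y z.
Proof. by rewrite formDl formNl. Qed.

Lemma formDr x y z : B z (x + y) = B z x + B z y.
Proof. by rewrite BC formDl rmorphD /= -!BC. Qed.

Lemma formZr a x z : B z (a *: x) = conjc a * B z x.
Proof. by rewrite BC formZl rmorphM /= -BC. Qed.

Lemma formNr x z : B z (- x) = - B z x.
Proof. by rewrite -scaleN1r formZr rmorphN1 mulN1r. Qed.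

Lemma form0r z : B z 0 = 0.
Proof. by rewrite BC form0l rmorph0. Qed.

Lemma formxxE x : B x x = (Re (B x x))%:C.
Proof. exact/complex_ge0E/BP. Qed.

Lemma Re_formxx_ge0 x : 0 <= Re (B x x).
Proof. by have := BP x; rewrite lecE => /andP[]. Qed.

Lemma hnorm_ge0 x : 0 <= hnorm B x.
Proof. exact: sqrtr_ge0. Qed.

Lemma sqr_hnorm x : hnorm B x ^+ 2 = Re (B x x).
Proof. exact/sqr_sqrtr/Re_formxx_ge0. Qed.

Lemma Re_formxx_shift x y (t : R) :
  Re (B (x + t%:C *: y) (x + t%:C *: y)) =
  Re (B x x) + 2 * t * Re (B x y) + t ^+ 2 * Re (B y y).
Proof.
rewrite formDl !formDr !formZl !formZr (BC x y) (formxxE x) (formxxE y).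
by case: (B x y) => b1 b2; simpc => /=; ring.
Qed.

Lemma Re_formxx_parallelogram x y :
  Re (B (x + y) (x + y)) + Re (B (x - y) (x - y)) = 2 * Re (B x x) + 2 * Re (B y y).
Proof.
have := Re_formxx_shift x y 1; have := Re_formxx_shift x y (-1).
by rewrite rmorph1 rmorphN1 scale1r scaleN1r => -> ->; ring.
Qed.

Lemma hnormN x : hnorm B (- x) = hnorm B x.
Proof. by rewrite /hnorm formNl formNr opprK. Qed.

Lemma hnorm_le x y : (hnorm B x <= hnorm B y) = (Re (B x x) <= Re (B y y)).
Proof. by rewrite /hnorm ler_sqrt ?Re_formxx_ge0. Qed.

Lemma hnorm_lt x e : 0 < e -> (hnorm B x < e) = (Re (B x x) < e ^+ 2).
Proof.
by move=> e_gt0; rewrite /hnorm -{1}(gtr0_norm e_gt0) -sqrtr_sqr ltr_sqrt ?exprn_gt0.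
Qed.

Lemma Re_form_CS x y : Re (B x y) ^+ 2 <= Re (B x x) * Re (B y y).
Proof.
apply: quad_ge0_sqr_le; first exact: Re_formxx_ge0.
by move=> t; rewrite mulrAC [_ * t ^+ 2]mulrC -Re_formxx_shift Re_formxx_ge0.
Qed.

Lemma normr_Re_form_le x y : `|Re (B x y)| <= hnorm B x * hnorm B y.
Proof.
rewrite -(@ler_pXn2r _ 2) ?nnegrE ?normr_ge0 ?mulr_ge0 ?hnorm_ge0 //.
by rewrite real_normK ?num_real // exprMn !sqr_hnorm Re_form_CS.
Qed.

Lemma normr_Im_form_le x y : `|Im (B x y)| <= hnorm B x * hnorm B y.
Proof.
have -> : Im (B x y) = Re (B x ('i%C *: y)).
  by rewrite formZr; case: (B x y) => b1 b2; simpc.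
have -> : hnorm B y = hnorm B ('i%C *: y).
  by rewrite /hnorm formZl formZr (formxxE y); simpc.
exact: normr_Re_form_le.
Qed.

Lemma hnormD_le x y : hnorm B (x + y) <= hnorm B x + hnorm B y.
Proof.
rewrite -(@ler_pXn2r _ 2) ?nnegrE ?addr_ge0 ?hnorm_ge0 //.
rewrite sqrrD !sqr_hnorm -[y]scale1r Re_formxx_shift expr1n !mul1r mulr1.
have := normr_Re_form_le x y; rewrite /hnorm scale1r.
by move: (Re (B x y)) => r /(le_trans (ler_norm r)); lra.
Qed.

End SesquilinearForm.

Section LinearMap.
Variables (K : pzRingType) (U : lmodType K) (T : U -> U).
Hypothesis Tlin : forall (a : K) x y, T (a *: x + y) = a *: T x + T y.

Lemma lin0 : T 0 = 0.
Proof. by have := Tlin (-1) 0 0; rewrite !scaleN1r !addNr. Qed.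

Lemma linD x y : T (x + y) = T x + T y.
Proof. by rewrite -[x]scale1r Tlin !scale1r. Qed.

Lemma linZ a x : T (a *: x) = a *: T x.
Proof. by rewrite -[a *: x]addr0 Tlin lin0 addr0. Qed.

Lemma linB x y : T (x - y) = T x - T y.
Proof. by rewrite linD -scaleN1r linZ scaleN1r. Qed.

End LinearMap.

Lemma eq0_of_small (R : realFieldType) (K r : R) : 0 <= K ->
  (forall e, 0 < e -> `|r| <= K * e) -> r = 0.
Proof.
move=> K_ge0 r_small; apply/eqP; rewrite -normr_eq0 eq_le normr_ge0 andbT.
apply/ler_addgt0Pr => e e_gt0; rewrite add0r.
have K1_gt0 : 0 < K + 1 by rewrite ltr_wpDl.
apply: le_trans (r_small _ (divr_gt0 e_gt0 K1_gt0)) _.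
by rewrite mulrCA ger_pMr // ler_pdivrMr // mul1r lerDl.
Qed.

Section Hilbert.
Variables (R : realType) (V : lmodType R[i]) (ip : V -> V -> R[i]).
Hypothesis ipL : forall (a : R[i]) (x y z : V), ip (a *: x + y) z = a * ip x z + ip y z.
Hypothesis ipC : forall x y, ip y x = conjc (ip x y).
Hypothesis ipP : forall x, 0 <= ip x x.
Hypothesis ipD : forall x, ip x x = 0 -> x = 0.
Hypothesis ipComplete : forall u : nat -> V,
  (forall e : R, 0 < e -> exists N, forall m n, (N <= m)%N -> (N <= n)%N ->
     hnorm ip (u m - u n) < e) ->
  exists l : V, forall e : R, 0 < e -> exists N, forall n, (N <= n)%N ->
     hnorm ip (u n - l) < e.

Local Notation hn := (hnorm ip).
Local Notation n2 x := (Re (ip x x)).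

Definition subspace (M : set V) :=
  M 0 /\ forall (a : R[i]) x y, M x -> M y -> M (a *: x + y).

Definition approx_closed (M : set V) :=
  forall l, (forall e, 0 < e -> exists2 m, M m & hn (l - m) < e) -> M l.

Lemma hnorm_eq0 x : hn x = 0 -> x = 0.
Proof. by move=> x0; apply: ipD; rewrite formxxE // -sqr_hnorm // x0 expr0n. Qed.

Lemma orth_of_min (M : set V) v m : subspace M -> M m ->
  (forall k, M k -> hn (v - m) <= hn (v - k)) -> forall k, M k -> ip (v - m) k = 0.
Proof.
move=> [M0 Mlin] Mm m_min.
have Re_orth k : M k -> Re (ip (v - m) k) = 0.
  move=> Mk; apply/eqP; rewrite -sqrf_eq0 eq_le sqr_ge0 andbT.
  rewrite -(mul0r (n2 k)); apply: quad_ge0_sqr_le; first exact: Re_formxx_ge0.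
  move=> t; have /m_min : M ((- t%:C) *: k + m) by exact: Mlin.
  rewrite opprD scaleNr opprK addrCA addrC (hnorm_le ipP) Re_formxx_shift //.
  by rewrite -addrA lerDl add0r mulrAC [n2 k * _]mulrC.
move=> k Mk; have Mik : M ('i%C *: k) by rewrite -[_ *: k]addr0; apply: Mlin.
have := Re_orth _ Mik; rewrite formZr //.
by move: (Re_orth _ Mk); case: (ip (v - m) k) => a b /= -> /=; simpc => /= ->.
Qed.

Lemma near_min_close (M : set V) v (d eps : R) a b : subspace M -> 0 <= d ->
  (forall k, M k -> d <= hn (v - k)) -> M a -> M b ->
  hn (v - a) < d + eps -> hn (v - b) < d + eps -> eps <= 1 ->
  n2 (a - b) < 4 * (2 * d + 1) * eps.
Proof.
move=> [M0 Mlin] d_ge0 d_le Ma Mb a_near b_near eps_le1.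
(* parallelogram law around the midpoint w of a and b, which lies in M *)
pose w := (2^-1 : R[i]) *: (b + a); pose h := w - b.
have Mw : M w.
  have Mba : M (b + a) by rewrite -[b]scale1r; exact: Mlin.
  by rewrite /w -[_ *: _]addr0; exact: Mlin.
have ww : w + w = b + a.
  by rewrite -scalerDl -[RHS]scale1r; congr (_ *: _); field.
have va : v - a = v - w - h.
  by rewrite opprB -addrA (addrCA (- w)) -opprD ww opprD addNKr.
have vb : v - b = v - w + h by rewrite addrA subrK.
have ab : a - b = h + h by rewrite addrACA ww addrACA subrr add0r.
have para := Re_formxx_parallelogram ipL ipC ipP (v - w) h.
have hh := Re_formxx_parallelogram ipL ipC ipP h h.
rewrite subrr (form0l ipL) -ab addr0 in hh.
rewrite -vb -va in para.
have := d_le _ Mw; have := hnorm_ge0 ip (v - w).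
have := hnorm_ge0 ip (v - a); have := hnorm_ge0 ip (v - b).
have := d_le _ Ma; have := d_le _ Mb.
rewrite -(sqr_hnorm ipP (v - w)) -(sqr_hnorm ipP (v - a)) -(sqr_hnorm ipP (v - b)) in para.
nra.
Qed.

Lemma near_min_cauchy (M : set V) v (d : R) (u : nat -> V) : subspace M -> 0 <= d ->
  (forall k, M k -> d <= hn (v - k)) ->
  (forall n, M (u n) /\ hn (v - u n) < d + n.+1%:R^-1) ->
  forall e, 0 < e -> exists N, forall m n, (N <= m)%N -> (N <= n)%N -> hn (u m - u n) < e.
Proof.
move=> Msub d_ge0 d_le u_near e e_gt0.
pose eps := Num.min (e ^+ 2 / (4 * (2 * d + 1))) 1.
have K_gt0 : 0 < 4 * (2 * d + 1) by rewrite mulr_gt0 ?ltr_wpDl ?mulr_ge0.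
have eps_gt0 : 0 < eps by rewrite lt_min ltr01 andbT divr_gt0 ?exprn_gt0.
have [N N_small] := inv_succ_lt eps_gt0.
exists N => m n le_Nm le_Nn; rewrite hnorm_lt //.
have near_eps k : (N <= k)%N -> hn (v - u k) < d + eps.
  by move=> le_Nk; apply: lt_trans (u_near k).2 _; rewrite ltrD2l N_small.
apply: lt_le_trans (near_min_close Msub d_ge0 d_le (u_near m).1 (u_near n).1
                      (near_eps _ le_Nm) (near_eps _ le_Nn) _) _.
  by rewrite ge_min lexx orbT.
by rewrite mulrC -ler_pdivlMr // ge_min lexx.
Qed.

Lemma exists_min_dist (M : set V) v : subspace M -> approx_closed M ->
  exists2 m, M m & forall k, M k -> hn (v - m) <= hn (v - k).
Proof.
move=> Msub Mcl.
pose D := [set hn (v - m) | m in M].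
have D_inf : has_inf D.
  split; first by exists (hn (v - 0)), 0 => //; exact: Msub.1.
  by exists 0 => _ [m _ <-]; exact: hnorm_ge0.
pose d := inf D.
have d_le k : M k -> d <= hn (v - k) by move=> Mk; apply: ge_inf D_inf.2 _ _; exists k.
have d_ge0 : 0 <= d by apply: lb_le_inf D_inf.1 _ => _ [m _ <-]; exact: hnorm_ge0.
have near n : exists m, M m /\ hn (v - m) < d + n.+1%:R^-1.
  have Vn_gt0 : 0 < n.+1%:R^-1 :> R by rewrite invr_gt0.
  by have [_ [m Mm <-]] := inf_adherent Vn_gt0 D_inf; exists m.
have [u u_near] := choice near.
have [l u_cvg] := ipComplete (near_min_cauchy Msub d_ge0 d_le u_near).
exists l.
  apply: Mcl => e e_gt0; have [N N_close] := u_cvg e e_gt0.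
  exists (u N); first exact: (u_near N).1.
  by rewrite -hnormN // opprB N_close.
move=> k Mk; apply: le_trans (d_le k Mk); apply/ler_addgt0Pr => e e_gt0.
have e2_gt0 : 0 < e / 2 by rewrite divr_gt0.
have [N1 N1_close] := u_cvg _ e2_gt0; have [N2 N2_small] := inv_succ_lt e2_gt0.
pose n := maxn N1 N2.
have := hnormD_le ipL ipC ipP (v - u n) (u n - l); rewrite addrA subrK.
have := (u_near n).2; have := N1_close n (leq_maxl _ _); have := N2_small n (leq_maxr _ _).
move: (n.+1%:R^-1 : R) => c. (* lra does not treat this inverse as an atom *)
lra.
Qed.

Lemma orth_proj (M : set V) v : subspace M -> approx_closed M ->
  exists2 m, M m & forall k, M k -> ip (v - m) k = 0.
Proof.
move=> Msub Mcl; have [m Mm m_min] := exists_min_dist v Msub Mcl.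
by exists m => //; exact: orth_of_min.
Qed.

Lemma bounded_op_bound (T : V -> V) : is_bounded_op ip T ->
  exists2 K, 0 <= K & forall x, hn (T x) <= K * hn x.
Proof.
case=> _ [K T_bd]; exists `|K| => // x.
by apply: le_trans (T_bd x) _; rewrite ler_wpM2r ?hnorm_ge0 ?ler_norm.
Qed.

Lemma ker_subspace (T : V -> V) : is_bounded_op ip T -> subspace [set x | T x = 0].
Proof.
case=> Tlin _; split=> [|a x y /= Tx Ty]; first exact: lin0.
by rewrite Tlin Tx Ty scaler0 addr0.
Qed.

Lemma approx_closed_ker (T : V -> V) : is_bounded_op ip T ->
  approx_closed [set x | T x = 0].
Proof.
move=> /[dup] [[Tlin _]] /bounded_op_bound [K K_ge0 T_bd] l l_approx.
apply: hnorm_eq0; apply: (eq0_of_small K_ge0) => e e_gt0.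
have [m /= Tm lm] := l_approx e e_gt0.
rewrite ger0_norm ?hnorm_ge0 // -[l](subrK m) linD // Tm addr0.
by apply: le_trans (T_bd _) _; rewrite ler_wpM2l // ltW.
Qed.

Lemma approx_closed_ker_fun (f : V -> R[i]) (K : R) : 0 <= K ->
  (forall x y, f (x - y) = f x - f y) ->
  (forall x, `|Re (f x)| <= K * hn x) -> (forall x, `|Im (f x)| <= K * hn x) ->
  approx_closed [set x | f x = 0].
Proof.
move=> K_ge0 fB Re_bd Im_bd l l_approx.
have small (g : R[i] -> R) : (forall x, `|g (f x)| <= K * hn x) -> g (f l) = 0.
  move=> g_bd; apply: (eq0_of_small K_ge0) => e e_gt0.
  have [m /= fm lm] := l_approx e e_gt0.
  have -> : f l = f (l - m) by rewrite fB fm subr0.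
  by apply: le_trans (g_bd _) _; rewrite ler_wpM2l // ltW.
by rewrite /=; case: (f l) (small _ Re_bd) (small _ Im_bd) => a b /= -> ->.
Qed.

Lemma riesz (f : V -> R[i]) (K : R) : 0 <= K ->
  (forall (a : R[i]) x y, f (a *: x + y) = a * f x + f y) ->
  (forall x, `|Re (f x)| <= K * hn x) -> (forall x, `|Im (f x)| <= K * hn x) ->
  exists w, forall x, f x = ip x w.
Proof.
move=> K_ge0 flin Re_bd Im_bd.
have f0 : f 0 = 0 by have := flin (-1) 0 0; rewrite scaleN1r addNr mulN1r addNr.
have fB x y : f (x - y) = f x - f y by rewrite -scaleN1r addrC flin mulN1r addrC.
have fZ a x : f (a *: x) = a * f x by rewrite -[a *: x]addr0 flin f0 addr0.
pose N := [set x | f x = 0].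
have Nsub : subspace N.
  by split=> [|a x y]; rewrite /N /= ?f0 // => fx fy; rewrite flin fx fy mulr0 addr0.
have [f_eq0 | /existsNP [x0 fx0]] := pselect (forall x, f x = 0).
  by exists 0 => x; rewrite f_eq0 form0r.
have [m Nm m_orth] := orth_proj x0 Nsub (approx_closed_ker_fun K_ge0 fB Re_bd Im_bd).
pose e := x0 - m.
have fe_neq0 : f e != 0 by rewrite fB Nm subr0; apply/eqP.
have ee_neq0 : ip e e != 0 by apply: contra fe_neq0 => /eqP/ipD ->; rewrite f0.
exists (conjc (f e / ip e e) *: e) => x.
have Nx : N (x - (f x / f e) *: e) by rewrite /N /= fB fZ mulfVK // subrr.
have := m_orth _ Nx; rewrite -/e ipC => /(congr1 conjc); rewrite conjcK rmorph0.
rewrite formBl // formZl // formZr // conjcK => /eqP; rewrite subr_eq0 => /eqP ->.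
by field; rewrite fe_neq0 ee_neq0.
Qed.

Lemma adjointP (T : V -> V) y x : is_bounded_op ip T ->
  ip (T x) y = ip x (adjoint ip T y).
Proof.
move=> /[dup] [[Tlin _]] /bounded_op_bound [K K_ge0 T_bd].
have ip_bd (g : R[i] -> R) : (forall z, `|g (ip (T z) y)| <= hn (T z) * hn y) ->
    forall z, `|g (ip (T z) y)| <= K * hn y * hn z.
  move=> g_bd z; apply: le_trans (g_bd z) _.
  by rewrite mulrAC ler_wpM2r ?hnorm_ge0.
have [w Tw] : exists w, forall z, ip (T z) y = ip z w.
  apply: (riesz (K := K * hn y)); first by rewrite mulr_ge0 ?hnorm_ge0.
  - by move=> a u v; rewrite Tlin ipL.
  - by apply: (ip_bd (@complex.Re R)) => z; exact: normr_Re_form_le.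
  - by apply: (ip_bd (@complex.Im R)) => z; exact: normr_Im_form_le.
exact: (xgetPex 0 (ex_intro (fun w => forall x, ip (T x) y = ip x w) w Tw)).
Qed.

Lemma mp_inverse_range (A : V -> V) w : is_bounded_op ip A ->
  A (mp_inverse ip A (A w)) = A w.
Proof.
(* with m the projection of w on ker A, w - m lies in the set defining A^+ (A w); any x in
   that set has A (w - x) orthogonal to the range of A, hence A x = A w *)
move=> Abd; have Alin := Abd.1.
have [m /= Am w_orth] := orth_proj w (ker_subspace Abd) (approx_closed_ker Abd).
rewrite /mp_inverse; case: xgetP => [x _ [_ x_orth] | no_x]; last first.
  exfalso; apply: (no_x (w - m)); split=> [k /w_orth // | v].
  by rewrite linB // Am subr0 subrr form0l.
by have := x_orth (w - x); rewrite linB // => /ipD/eqP; rewrite subr_eq0 => /eqP.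
Qed.

Lemma positive_op_sym (A : V -> V) :
  (forall (a : R[i]) x y, A (a *: x + y) = a *: A x + A y) ->
  (forall x, 0 <= ip (A x) x) -> forall x y, ip (A x) y = ip x (A y).
Proof.
move=> Alin A_ge0 x y.
(* polarization: <A u, u> is real for u = x + y and u = x + i y *)
have Im0 z := ger0_Im (A_ge0 z).
move: (Im0 (x + y)) (Im0 (x + 'i%C *: y)).
rewrite !(linD Alin) !(linZ Alin) !(formDl ipL) !(formDr ipL ipC) !(formZl ipL).
rewrite !(formZr ipL ipC) [ip x (A y)]ipC.
move: (Im0 x) (Im0 y); case: (ip (A x) x) => a1 a2; case: (ip (A y) y) => b1 b2.
case: (ip (A x) y) => c1 c2; case: (ip (A y) x) => d1 d2 /=.
simpc => /= -> -> h1 h2.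
by congr (_ +i* _); lra.
Qed.

End Hilbert.

Section UnitSphereSup.
Variables (R : realType) (V : lmodType R[i]) (ip : V -> V -> R[i]) (A : V -> V).
Local Open Scope ereal_scope.

Lemma supA_ge0 (f : V -> R) : 0 <= supA ip A f.
Proof. by apply: ereal_sup_ubound; left. Qed.

Lemma supA_ub (f : V -> R) z : normA ip A z = 1%R -> (f z)%:E <= supA ip A f.
Proof. by move=> z1; apply: ereal_sup_ubound; right; exists z. Qed.

Lemma supA_le (f : V -> R) (M : \bar R) : 0 <= M ->
  (forall z, normA ip A z = 1%R -> (f z)%:E <= M) -> supA ip A f <= M.
Proof. by move=> M_ge0 f_le; apply: ge_ereal_sup => _ [-> // | [z z1 <-]]; exact: f_le. Qed.

Lemma le_supA (f g : V -> R) : (forall z, normA ip A z = 1%R -> f z <= g z)%R ->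
  supA ip A f <= supA ip A g.
Proof.
move=> fg; apply: supA_le (supA_ge0 g) _ => z z1.
by apply: le_trans (supA_ub g z1); rewrite lee_fin fg.
Qed.

Lemma le_esqrt_sqr (a b : \bar R) (x y : R) : (0 <= x)%R -> (0 <= y)%R ->
  x%:E <= a -> y%:E <= b -> (Num.sqrt (x ^+ 2 + y ^+ 2))%:E <= esqrt (a * a + b * b).
Proof.
move=> x_ge0 y_ge0; case: a => [a| |] //; case: b => [b| |] // xa yb; try exact: leey.
rewrite !lee_fin in xa yb *.
have a_ge0 := le_trans x_ge0 xa; have b_ge0 := le_trans y_ge0 yb.
by rewrite ler_sqrt ?addr_ge0 ?mulr_ge0 // !expr2 lerD ?ler_pM.
Qed.

Lemma supA_le_esqrt (f g h : V -> R) : (forall z, 0 <= f z)%R -> (forall z, 0 <= h z)%R ->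
  (forall z, normA ip A z = 1%R -> g z <= Num.sqrt (f z ^+ 2 + h z ^+ 2))%R ->
  supA ip A g <= esqrt (supA ip A f * supA ip A f + supA ip A h * supA ip A h).
Proof.
move=> f_ge0 h_ge0 g_le; apply: supA_le.
  by case: (_ + _) => //= r; rewrite lee_fin sqrtr_ge0.
move=> z z1; apply: le_trans (le_esqrt_sqr (f_ge0 z) (h_ge0 z) (supA_ub f z1) (supA_ub h z1)).
by rewrite lee_fin g_le.
Qed.

End UnitSphereSup.

Lemma sqr_cabs (R : realType) (z : R[i]) : cabs z ^+ 2 = Re z ^+ 2 + Im z ^+ 2.
Proof. by rewrite sqr_sqrtr ?addr_ge0 ?sqr_ge0. Qed.

Lemma le_sqrt_sqrD (R : rcfType) (x y : R) : 0 <= x -> x <= Num.sqrt (x ^+ 2 + y ^+ 2).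
Proof.
move=> x_ge0; rewrite -{1}(ger0_norm x_ge0) -sqrtr_sqr.
by rewrite ler_sqrt ?addr_ge0 ?sqr_ge0 // lerDl sqr_ge0.
Qed.

Section Sharp.
Variables (R : realType) (V : lmodType R[i]) (ip : V -> V -> R[i]) (A S : V -> V).
Hypothesis hilb : is_complex_hilbert ip.
Hypothesis Abd : is_bounded_op ip A.
Hypothesis A_ge0 : forall x, 0 <= ip (A x) x.
Hypothesis S_BA : in_BA ip A S.

Local Notation ipA := (ipA ip A).
Local Notation normA := (normA ip A).
Local Notation Ssharp := (asharp ip A S).

Lemma ipA_linear (a : R[i]) x y z : ipA (a *: x + y) z = a * ipA x z + ipA y z.
Proof. by case: hilb => ipL _ _ _ _; rewrite /ipA Abd.1 ipL. Qed.

Lemma ipA_hermitian x y : ipA y x = conjc (ipA x y).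
Proof.
case: hilb => ipL ipC _ _ _.
by rewrite /ipA (positive_op_sym ipL ipC Abd.1 A_ge0) -ipC.
Qed.

Lemma sqr_normA x : normA x ^+ 2 = Re (ipA x x).
Proof. exact: (sqr_hnorm A_ge0). Qed.

Lemma A_asharp u : A (Ssharp u) = adjoint ip S (A u).
Proof.
case: hilb => ipL ipC ipP ipD ipComplete; case: S_BA => _ [Rop [_ ARop]].
by rewrite /asharp -ARop (mp_inverse_range ipL ipC ipP ipD ipComplete _ Abd).
Qed.

Lemma ipA_asharp u v : ipA (Ssharp u) v = ipA u (S v).
Proof.
case: hilb => ipL ipC ipP ipD ipComplete.
by rewrite /ipA A_asharp ipC -(adjointP ipL ipC ipP ipD ipComplete _ _ S_BA.1) -ipC.
Qed.

Lemma ipA_ReA z : ipA (ReA ip A S z) z = (Re (ipA (S z) z))%:C.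
Proof.
rewrite /ReA (formZl ipA_linear) (formDl ipA_linear) ipA_asharp.
rewrite [ipA z _]ipA_hermitian.
by rewrite addcJ mulKf ?pnatr_eq0.
Qed.

Lemma ipA_ImA z : ipA (ImA ip A S z) z = (Im (ipA (S z) z))%:C.
Proof.
rewrite /ImA (formZl ipA_linear) (formBl ipA_linear) ipA_asharp.
rewrite [ipA z _]ipA_hermitian.
by rewrite subcJ mulrAC mulKf ?mulf_neq0 ?pnatr_eq0 ?neq0Ci.
Qed.

Lemma ipA_asharp_S z : ipA (Ssharp (S z)) z = (normA (S z) ^+ 2)%:C.
Proof. by rewrite ipA_asharp sqr_normA (formxxE A_ge0). Qed.

Lemma ipA_ReA_sharp z :
  ipA (ReA ip A S z + 'i%C *: Ssharp (S z)) z = Re (ipA (S z) z) +i* normA (S z) ^+ 2.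
Proof. by rewrite (formDl ipA_linear) ipA_ReA (formZl ipA_linear) ipA_asharp_S; simpc. Qed.

Lemma ipA_ImA_sharp z :
  ipA (ImA ip A S z + 'i%C *: Ssharp (S z)) z = Im (ipA (S z) z) +i* normA (S z) ^+ 2.
Proof. by rewrite (formDl ipA_linear) ipA_ImA (formZl ipA_linear) ipA_asharp_S; simpc. Qed.

Lemma sqr_Re_ipA_le z : normA z = 1 -> Re (ipA (S z) z) ^+ 2 <= normA (ReA ip A S z) ^+ 2.
Proof.
move=> z1; have := Re_form_CS ipA_linear ipA_hermitian A_ge0 (ReA ip A S z) z.
by rewrite ipA_ReA -!sqr_normA z1 expr1n mulr1.
Qed.

Lemma sqr_Im_ipA_le z : normA z = 1 -> Im (ipA (S z) z) ^+ 2 <= normA (ImA ip A S z) ^+ 2.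
Proof.
move=> z1; have := Re_form_CS ipA_linear ipA_hermitian A_ge0 (ImA ip A S z) z.
by rewrite ipA_ImA -!sqr_normA z1 expr1n mulr1.
Qed.

Lemma dnumrad_sqr_ReA z :
  cabs (ipA (S z) z) ^+ 2 + normA (S z) ^+ 4 =
  cabs (ipA (ReA ip A S z + 'i%C *: Ssharp (S z)) z) ^+ 2 + Im (ipA (S z) z) ^+ 2.
Proof. by rewrite ipA_ReA_sharp !sqr_cabs /= -[4%N]/(2 * 2)%N exprM; ring. Qed.

Lemma dnumrad_sqr_ImA z :
  cabs (ipA (S z) z) ^+ 2 + normA (S z) ^+ 4 =
  cabs (ipA (ImA ip A S z + 'i%C *: Ssharp (S z)) z) ^+ 2 + Re (ipA (S z) z) ^+ 2.
Proof. by rewrite ipA_ImA_sharp !sqr_cabs /= -[4%N]/(2 * 2)%N exprM; ring. Qed.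

End Sharp.

Theorem theorem2p7 (R : realType) (V : lmodType R[i]) (ip : V -> V -> R[i])
  (A S : V -> V) :
  is_complex_hilbert ip ->
  is_positive_op ip A ->
  in_BA ip A S ->
  let W1 := fun z => ReA ip A S z + ('i)%C *: asharp ip A S (S z) in
  let W2 := fun z => ImA ip A S z + ('i)%C *: asharp ip A S (S z) in
  (Order.max (numradA ip A W1) (numradA ip A W2) <= dnumradA ip A S)%E /\
  (dnumradA ip A S <=
     Order.min
       (esqrt (adde (numradA ip A W1 * numradA ip A W1)
                    (opnormA ip A (ImA ip A S) * opnormA ip A (ImA ip A S))))
       (esqrt (adde (numradA ip A W2 * numradA ip A W2)
                    (opnormA ip A (ReA ip A S) * opnormA ip A (ReA ip A S)))))%E.
Proof.
move=> hilb [Abd A_ge0] S_BA W1 W2; rewrite /W1 /W2.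
have dnumRe := dnumrad_sqr_ReA hilb Abd A_ge0 S_BA.
have dnumIm := dnumrad_sqr_ImA hilb Abd A_ge0 S_BA.
rewrite ge_max le_min; split; apply/andP; split.
- by apply: le_supA => z _; rewrite dnumRe le_sqrt_sqrD ?sqrtr_ge0.
- by apply: le_supA => z _; rewrite dnumIm le_sqrt_sqrD ?sqrtr_ge0.
- apply: supA_le_esqrt => [z|z|z z1]; rewrite ?sqrtr_ge0 // dnumRe.
  by rewrite ler_sqrt ?addr_ge0 ?sqr_ge0 // lerD2l sqr_Im_ipA_le.
- apply: supA_le_esqrt => [z|z|z z1]; rewrite ?sqrtr_ge0 // dnumIm.
  by rewrite ler_sqrt ?addr_ge0 ?sqr_ge0 // lerD2l sqr_Re_ipA_le.
Qed.
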